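(* Let $q$ be a prime with $q\equiv 3 \pmod 4$. Let $x^1,y^1,x^2,y^2 \in \mathbb{F}_q^2$ with $\|x^1-y^1\| = \|x^2-y^2\|$ and $x^1-y^1 \ne x^2-y^2$. Then there exists a unique pair $(p,\theta)$ with $p \in \mathbb{F}_q^2$ and $\theta \in SO(2,q)\setminus\{I\}$ such that $f_{p,\theta}(x^1) = x^2$ and $f_{p,\theta}(y^1)=y^2$.
   Context: $\|(a_1,a_2)\| = a_1^2+a_2^2$. $SO(2,q) = \{A \in \mathrm{Mat}_2(\mathbb{F}_q) : A^TA = I, \det A = 1\} = \left\{\begin{pmatrix} a & -b\\ b & a\end{pmatrix} : a^2+b^2=1\right\}$. For $p \in \mathbb{F}_q^2$ (column vector) and $\theta \in SO(2,q)$, $f_{p,\theta}:\mathbb{F}_q^2\to\mathbb{F}_q^2$ is $f_{p,\theta}(x) = \theta(x-p)+p$. *)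

From mathcomp Require Import all_boot all_algebra.
Set Implicit Arguments. Unset Strict Implicit. Unset Printing Implicit Defensive.
Import GRing.Theory.
Local Open Scope ring_scope.

Definition sqnorm (F : fieldType) (a : 'cV[F]_2) : F :=
  a ord0 ord0 ^+ 2 + a (lift ord0 ord0) ord0 ^+ 2.

Definition SO2 (F : fieldType) : pred 'M[F]_2 :=
  fun A => (A^T *m A == 1%:M) && (\det A == 1).

Definition frot (F : fieldType) (p : 'cV[F]_2) (th : 'M[F]_2) (x : 'cV[F]_2)
  : 'cV[F]_2 := th *m (x - p) + p.

From mathcomp Require Import all_boot all_algebra all_field ring zify.

(* Identify F^2 with F[i], i^2 = -1, whose norm is a^2 + b^2: SO(2) consists exactly of the
   matrices rotmx c of multiplication by elements c of norm 1.  Since rotmx c *m v = rotmx v *m c,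
   a rotation taking v = x1 - y1 to w = x2 - y2 is multiplication by c = w / v, which is forced,
   has norm 1 because the norm is multiplicative, and differs from 1 because v <> w.  When -1 is
   not a square (q = 3 mod 4) every nonzero vector has nonzero norm, so 1 - rotmx c is invertible
   and the centre p is the unique solution of (1 - rotmx c) p = x2 - rotmx c x1. *)
Set Implicit Arguments.
Unset Strict Implicit.
Unset Printing Implicit Defensive.

Import GRing.Theory.
Local Open Scope ring_scope.

Section Rotations.
Variable F : fieldType.
Local Notation i0 := (ord0 : 'I_2).
Local Notation i1 := (lift ord0 ord0 : 'I_2).

Lemma ord2P (i : 'I_2) : i = i0 \/ i = i1.
Proof. by case: i => [[|[|//]]] ?; [left|right]; apply: val_inj. Qed.

Lemma mx2P m (A B : 'M[F]_(2, m.+1)) :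
  (forall j, A i0 j = B i0 j) -> (forall j, A i1 j = B i1 j) -> A = B.
Proof. by move=> A0 A1; apply/matrixP => i j; case: (ord2P i) => ->. Qed.

Lemma mulmx2E m (A : 'M[F]_2) (B : 'M[F]_(2, m)) i j :
  (A *m B) i j = A i i0 * B i0 j + A i i1 * B i1 j.
Proof. by rewrite mxE !big_ord_recl big_ord0 addr0. Qed.

Lemma det_mx22 (A : 'M[F]_2) : \det A = A i0 i0 * A i1 i1 - A i0 i1 * A i1 i0.
Proof.
rewrite (expand_det_row _ ord0) !big_ord_recl big_ord0 /cofactor !det_mx11 !mxE /=.
have -> : (lift (lift ord0 ord0) 0 : 'I_2) = ord0 by apply/val_inj.
have -> : (lift ord0 0 : 'I_2) = i1 by apply/val_inj.
by rewrite !expr0 expr1; ring.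
Qed.

(* [rotmx v] is the matrix of multiplication by the complex number v0 + i v1. *)
Definition rotmx (v : 'cV[F]_2) : 'M[F]_2 :=
  \matrix_(i, j) if j == i0 then v i 0 else if i == i0 then - v i1 0 else v i0 0.

Definition e0 : 'cV[F]_2 := delta_mx 0 0.

Lemma rotmxE v : [/\ rotmx v i0 i0 = v i0 0, rotmx v i0 i1 = - v i1 0,
  rotmx v i1 i0 = v i1 0 & rotmx v i1 i1 = v i0 0].
Proof. by rewrite !mxE. Qed.

Lemma rotmx_mulmxC u v : rotmx u *m v = rotmx v *m u.
Proof.
have [U00 U01 U10 U11] := rotmxE u; have [V00 V01 V10 V11] := rotmxE v.
by apply: mx2P => j; rewrite (ord1 j) !mulmx2E ?U00 ?U01 ?U10 ?U11 ?V00 ?V01 ?V10 ?V11; ring.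
Qed.

Lemma rotmxK u : rotmx u *m e0 = u.
Proof.
have [U00 U01 U10 U11] := rotmxE u.
by apply: mx2P => j; rewrite (ord1 j) !mulmx2E !mxE /= ?U00 ?U01 ?U10 ?U11; ring.
Qed.

Lemma rotmx_e0 : rotmx e0 = 1%:M.
Proof. by apply: mx2P => j; case: (ord2P j) => ->; rewrite !mxE /= ?oppr0. Qed.

Lemma rotmxB u v : rotmx (u - v) = rotmx u - rotmx v.
Proof. by apply/matrixP => i j; rewrite !mxE; case: ifP => _; [|case: ifP => _]; rewrite ?opprD. Qed.

Lemma det_rotmx v : \det (rotmx v) = sqnorm v.
Proof. by have [V00 V01 V10 V11] := rotmxE v; rewrite det_mx22 V00 V01 V10 V11 /sqnorm; ring. Qed.

Lemma unitmx_rotmx v : (rotmx v \in unitmx) = (sqnorm v != 0).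
Proof. by rewrite unitmxE det_rotmx unitfE. Qed.

Lemma sqnorm_rotmx_mul u v : sqnorm (rotmx u *m v) = sqnorm u * sqnorm v.
Proof. by have [U00 U01 U10 U11] := rotmxE u; rewrite /sqnorm !mulmx2E U00 U01 U10 U11; ring. Qed.

Lemma SO2_rotmx v : SO2 (rotmx v) = (sqnorm v == 1).
Proof.
rewrite /SO2 det_rotmx andbC; case: eqP => //= Nv; apply/eqP.
apply: mx2P => j; case: (ord2P j) => ->;
  rewrite !mulmx2E !mxE /= ?mulr1n ?mulr0n -?Nv /sqnorm; ring.
Qed.

Lemma mulmx_e0E (A : 'M[F]_2) i : (A *m e0) i 0 = A i i0.
Proof. by rewrite mulmx2E !mxE /=; ring. Qed.

Lemma SO2_rotmxP (A : 'M[F]_2) : SO2 A -> A = rotmx (A *m e0).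
Proof.
case/andP=> /eqP/matrixP AtA /eqP; rewrite det_mx22.
have := AtA i0 i0; have := AtA i0 i1; rewrite !mulmx2E !mxE /= ?mulr1n ?mulr0n => orth norm1 det1.
suff [d_a c_b] : A i1 i1 = A i0 i0 /\ A i0 i1 = - A i1 i0.
  have [R00 R01 R10 R11] := rotmxE (A *m e0).
  by apply: mx2P => j; case: (ord2P j) => ->; rewrite ?R00 ?R01 ?R10 ?R11 !mulmx_e0E.
move: (A i0 i0) (A i0 i1) (A i1 i0) (A i1 i1) orth norm1 det1 => a c b d orth norm1 det1.
(* [d - a] and [c + b] are combinations of [a^2 + b^2 - 1], [a c + b d] and [a d - c b - 1]. *)
split; apply/eqP; rewrite -subr_eq0 ?opprK; apply/eqP.
- have -> : d - a = a * (a * d - c * b - 1) + b * (a * c + b * d) - d * (a * a + b * b - 1) by ring.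
  by rewrite norm1 det1 orth; ring.
- have -> : c + b = a * (a * c + b * d) - b * (a * d - c * b - 1) - c * (a * a + b * b - 1) by ring.
  by rewrite norm1 det1 orth; ring.
Qed.

Lemma frotE p th (x : 'cV[F]_2) : frot p th x = th *m x + (1%:M - th) *m p.
Proof. by rewrite /frot mulmxBr mulmxBl mul1mx addrA addrAC. Qed.

Lemma frot_pairP p th (x1 y1 x2 y2 : 'cV[F]_2) :
  frot p th x1 = x2 /\ frot p th y1 = y2 <->
  th *m (x1 - y1) = x2 - y2 /\ (1%:M - th) *m p = x2 - th *m x1.
Proof.
rewrite !frotE mulmxBr; split=> [[<- <-]|[rot_xy ->]]; split.
- by rewrite opprD addrACA subrr addr0.
- by rewrite addrAC subrr add0r.
- by rewrite addrCA subrr addr0.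
- by rewrite addrCA -opprB rot_xy subKr.
Qed.

Section NonSquareMinusOne.
Hypothesis sqr_neqN1 : forall x : F, x ^+ 2 != -1.

Lemma sqnorm_eq0 (v : 'cV[F]_2) : (sqnorm v == 0) = (v == 0).
Proof.
apply/idP/eqP=> [|->]; last by rewrite /sqnorm !mxE expr0n addr0.
rewrite /sqnorm addr_eq0 => /eqP sq_v.
have v1 : v i1 0 = 0.
  have [//|nz] := eqVneq (v i1 0) 0.
  by move: (sqr_neqN1 (v i0 0 / v i1 0)); rewrite expr_div_n sq_v mulNr divff ?eqxx ?expf_neq0.
have v0 : v i0 0 = 0 by apply/eqP; rewrite -sqrf_eq0 sq_v v1 expr0n oppr0.
by apply: mx2P => j; rewrite (ord1 j) !mxE.
Qed.

Theorem frot_exists_unique (x1 y1 x2 y2 : 'cV[F]_2) :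
  sqnorm (x1 - y1) = sqnorm (x2 - y2) -> x1 - y1 <> x2 - y2 ->
  exists! pt : 'cV[F]_2 * 'M[F]_2,
    [/\ SO2 pt.2, pt.2 <> 1%:M, frot pt.1 pt.2 x1 = x2 & frot pt.1 pt.2 y1 = y2].
Proof.
set v := x1 - y1; set w := x2 - y2 => Nvw vNw.
have Nv_neq0 : sqnorm v != 0.
  rewrite sqnorm_eq0; apply: contra_notN vNw => /eqP v0.
  by rewrite v0; apply/esym/eqP; rewrite -sqnorm_eq0 -Nvw v0 sqnorm_eq0.
have v_unit : rotmx v \in unitmx by rewrite unitmx_rotmx.
pose c := invmx (rotmx v) *m w.
have rot_vw u : rotmx u *m v = w <-> u = c.
  by rewrite rotmx_mulmxC /c; split=> [<-|->]; rewrite ?mulKmx ?mulKVmx.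
have cv : rotmx c *m v = w by apply/rot_vw.
have Nc : sqnorm c = 1.
  by apply: (mulIf Nv_neq0); rewrite mul1r -sqnorm_rotmx_mul cv Nvw.
have c_neq_e0 : c != e0.
  by apply: contra_notN vNw => /eqP c_e0; move: cv; rewrite c_e0 rotmx_e0 mul1mx.
have I_rot_unit : 1%:M - rotmx c \in unitmx.
  by rewrite -rotmx_e0 -rotmxB unitmx_rotmx sqnorm_eq0 subr_eq0 eq_sym.
pose p := invmx (1%:M - rotmx c) *m (x2 - rotmx c *m x1).
exists (p, rotmx c); split.
  split=> /=; first by rewrite SO2_rotmx Nc.
  - by move/(congr1 (mulmx^~ e0)); rewrite rotmxK mul1mx; apply/eqP.
  - by case: (frot_pairP p (rotmx c) x1 y1 x2 y2).2; rewrite ?mulKVmx.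
  - by case: (frot_pairP p (rotmx c) x1 y1 x2 y2).2; rewrite ?mulKVmx.
move=> [p' th] [/= th_SO2 _ fx fy]; have /frot_pairP[rot_th fix_p'] := conj fx fy.
have th_c : th = rotmx c by rewrite (SO2_rotmxP th_SO2); congr rotmx; apply/rot_vw; rewrite -SO2_rotmxP.
by rewrite /p -th_c -fix_p' mulKmx // th_c.
Qed.
End NonSquareMinusOne.
End Rotations.

Lemma Fp_sqr_neqN1 q : prime q -> (q %% 4 = 3)%N -> forall x : 'F_q, x ^+ 2 != -1.
Proof.
move=> q_pr q_mod4 x; apply/eqP => x2N1.
have x_neq0 : x != 0 by apply: contra_eq_neq x2N1 => ->; rewrite expr0n eq_sym oppr_eq0 oner_eq0.
(* Fermat: [x^(q-1) = 1], while [x^(q-1) = (x^2)^(2k+1) = -1] for [q = 4k + 3]. *)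
have q_eq : q = (q %/ 4 * 4 + 3)%N by rewrite {1}(divn_eq q 4) q_mod4.
have : x ^+ (q %/ 4 * 4 + 2) * x = 1 * x.
  by rewrite -exprSr -addnS -q_eq mul1r -{2}(expf_card x) card_Fp.
have -> : (q %/ 4 * 4 + 2 = 2 * (q %/ 4 * 2).+1)%N by lia.
move/(mulIf x_neq0); rewrite exprM x2N1 -signr_odd /= oddM andbF expr1.
move/eqP; rewrite -subr_eq0 -opprD oppr_eq0 -mulr2n.
rewrite -(dvdn_pcharf (pchar_Fp q_pr)) => /dvdn_leq; lia.
Qed.

Theorem lemma2p1 (q : nat) (hq : prime q) (hq3 : (q %% 4 = 3)%N)
  (x1 y1 x2 y2 : 'cV['F_q]_2) :
  sqnorm (x1 - y1) = sqnorm (x2 - y2) ->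
  x1 - y1 <> x2 - y2 ->
  exists! pt : 'cV['F_q]_2 * 'M['F_q]_2,
    [/\ SO2 pt.2, pt.2 <> 1%:M,
        frot pt.1 pt.2 x1 = x2 & frot pt.1 pt.2 y1 = y2].
Proof. by apply: frot_exists_unique; apply: Fp_sqr_neqN1. Qed.
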